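(* Let $0<s<r<1$ and let $P$ be a compact packing of the plane by discs of radii $1$, $r$, $s$. Then the coding of the corona of every $s$-disc of $P$ is, up to cyclic rotation and reversal, either $\mathrm{ssssss}$ or one of the following $55$ words: rrrrr, rrrrs, rrrss, rrsrs, rrrr, rrsss, rsrss, rrrs, rrr, rrss, 11111, 1111s, 111ss, 11s1s, 1111, 11sss, 1s1ss, 111s, 111, 11ss, 1111r, 111rs, 11rss, 11srs, 111r, 1rsss, 1srss, 11rs, 11r, 1rss, 111rr, 11r1s, 1r1ss, 1rs1s, 11rr, 1r1s, 1rr, 11r1r, 11rrs, 1rrss, 1rsrs, 1r1r, 1rrs, 11rrr, 1r1rs, r1rss, rrs1s, 1rrr, r1rs, 1r1rr, 1rr1s, 1rrrr, 1rrrs, r11rs, r1rrs.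
   Context: A packing is a set of discs in the plane with pairwise disjoint interiors; it is compact if its contact graph (centers as vertices, edges between tangent discs) is a triangulation of the plane. For $x\in\{1,r,s\}$, an $x$-disc is a disc of radius $x$. The corona of a disc $D$ in a compact packing is the set of discs tangent to $D$; its coding is the cyclic word over the alphabet $\{1,r,s\}$ obtained by listing the radii of these discs in angular order around $D$ (consecutive letters correspond to tangent discs). Codings are considered up to cyclic rotation and reversal. *)

From Stdlib Require Import Reals Lra List String Ascii.
Open Scope R_scope.

Inductive letter : Type := L1 | Lr | Ls.

Definition word := list letter.

Definition radius (r s : R) (a : letter) : R :=
  match a with L1 => 1 | Lr => r | Ls => s end.

Definition dist2 (p q : R * R) : R :=
  sqrt ((fst p - fst q) ^ 2 + (snd p - snd q) ^ 2).

(** A family of discs indexed by [I]: disc [i] has center [c i] and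
    radius [radius r s (k i)]. *)

Definition is_packing {I : Type} (r s : R) (c : I -> R * R) (k : I -> letter) : Prop :=
  forall i j, i <> j -> dist2 (c i) (c j) >= radius r s (k i) + radius r s (k j).

Definition tangent {I : Type} (r s : R) (c : I -> R * R) (k : I -> letter) (i j : I) : Prop :=
  i <> j /\ dist2 (c i) (c j) = radius r s (k i) + radius r s (k j).

(** [L] lists all discs tangent to disc [i], in counterclockwise angular
    order around [i]; consecutive discs (cyclically) are tangent, and each
    angular gap between consecutive neighbours is less than pi, so that the
    triangles (i, L_m, L_{m+1}) are faces of the contact graph filling a full
    turn around the center of [i]. *)
Definition is_corona {I : Type} (r s : R) (c : I -> R * R) (k : I -> letter)
    (i : I) (L : list I) : Prop :=
  let n := List.length L in
  NoDup L /\
  (forall j, In j L <-> tangent r s c k i j) /\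
  (forall m, (m < n)%nat ->
     tangent r s c k (nth m L i) (nth (S m mod n) L i)) /\
  exists th : nat -> R,
    (forall m, (m < n)%nat ->
       c (nth m L i) =
         (fst (c i) + (radius r s (k i) + radius r s (k (nth m L i))) * cos (th m),
          snd (c i) + (radius r s (k i) + radius r s (k (nth m L i))) * sin (th m))) /\
    (forall m, (S m < n)%nat -> th m < th (S m) < th m + PI) /\
    (0 < n)%nat /\
    th (pred n) < th O + 2 * PI < th (pred n) + PI.

(** Compact packing: every disc is surrounded by a full corona, i.e. the
    contact graph is a triangulation of the plane (local characterization). *)
Definition is_compact_packing {I : Type} (r s : R) (c : I -> R * R) (k : I -> letter) : Prop :=
  is_packing r s c k /\ forall i, exists L, is_corona r s c k i L.

Definition coding {I : Type} (k : I -> letter) (L : list I) : word := map k L.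

Definition rot (n : nat) (w : word) : word := skipn n w ++ firstn n w.

Definition cyc_equiv (w w' : word) : Prop :=
  exists n, rot n w = w' \/ rot n (rev w) = w'.

Fixpoint parse (str : string) : word :=
  match str with
  | EmptyString => nil
  | String a rest =>
      if Ascii.eqb a "1"%char then L1 :: parse rest
      else if Ascii.eqb a "r"%char then Lr :: parse rest
      else Ls :: parse rest
  end.

Definition allowed_words : list word :=
  map parse ("ssssss" ::
  "rrrrr" :: "rrrrs" :: "rrrss" :: "rrsrs" :: "rrrr" :: "rrsss" :: "rsrss" ::
  "rrrs" :: "rrr" :: "rrss" :: "11111" :: "1111s" :: "111ss" :: "11s1s" ::
  "1111" :: "11sss" :: "1s1ss" :: "111s" :: "111" :: "11ss" :: "1111r" ::
  "111rs" :: "11rss" :: "11srs" :: "111r" :: "1rsss" :: "1srss" :: "11rs" ::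
  "11r" :: "1rss" :: "111rr" :: "11r1s" :: "1r1ss" :: "1rs1s" :: "11rr" ::
  "1r1s" :: "1rr" :: "11r1r" :: "11rrs" :: "1rrss" :: "1rsrs" :: "1r1r" ::
  "1rrs" :: "11rrr" :: "1r1rs" :: "r1rss" :: "rrs1s" :: "1rrr" :: "r1rs" ::
  "1r1rr" :: "1rr1s" :: "1rrrr" :: "1rrrs" :: "r11rs" :: "r1rrs" :: nil)%string.

Lemma allowed_words_length : List.length allowed_words = 56%nat.
Proof. reflexivity. Qed.

From Stdlib Require Import Reals Lra Lia List Bool.
Import ListNotations.
Open Scope R_scope.

(** Two consecutive neighbours of radii [x, y >= s] of an [s]-disc are tangent
    to it and to each other, so the law of cosines in the triangle of centres
    gives, for the angle [g] they subtend at the centre of the [s]-disc,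
      [(s + x) (s + y) (1 - 2 cos g) = 3 (x - s) (y - s) + 2 s ((x - s) + (y - s))].
    Hence [g >= PI/3], with equality only when [x = y = s]; [g < PI/2] when one
    of them is an [s]-disc (then [cos g = s / (s + y) > 0]); and [g < PI] anyway.
    The angles add up to [2 PI], so either the corona is [ssssss], or it has at
    most five discs and the upper bounds add up to more than [2 PI].  A finite
    enumeration of the words of length at most 6 shows that every word passing
    this test is, up to rotation and reversal, in the list. *)

Definition Rsum (l : list R) : R := fold_right Rplus 0 l.

Lemma Rsum_map_le {A : Type} (f g : A -> R) (l : list A) :
  (forall x, In x l -> f x <= g x) -> Rsum (map f l) <= Rsum (map g l).
Proof.
  induction l as [|a l IH]; intros Hfg; simpl; [lra|].
  assert (f a <= g a) by (apply Hfg; left; reflexivity).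
  assert (Rsum (map f l) <= Rsum (map g l))
    by (apply IH; intros; apply Hfg; right; assumption).
  unfold Rsum in *; lra.
Qed.

Lemma Rsum_map_lt {A : Type} (f g : A -> R) (l : list A) :
  (forall x, In x l -> f x <= g x) -> (exists x, In x l /\ f x < g x) ->
  Rsum (map f l) < Rsum (map g l).
Proof.
  induction l as [|a l IH]; intros Hfg [x [Hx Hlt]]; simpl; [contradiction|].
  assert (Hle : forall y, In y l -> f y <= g y) by (intros; apply Hfg; right; assumption).
  pose proof (Rsum_map_le f g l Hle).
  assert (f a <= g a) by (apply Hfg; left; reflexivity).
  destruct Hx as [<-|Hx].
  - unfold Rsum in *; lra.
  - assert (Rsum (map f l) < Rsum (map g l)) by (apply IH; eauto).
    unfold Rsum in *; lra.
Qed.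

Lemma Rsum_map_const {A : Type} (c : R) (l : list A) :
  Rsum (map (fun _ => c) l) = INR (length l) * c.
Proof.
  induction l as [|a l IH]; simpl; [lra|].
  change (c + Rsum (map (fun _ => c) l) = INR (S (length l)) * c).
  rewrite IH, S_INR; ring.
Qed.

Lemma Rsum_map_scal_r {A : Type} (c : R) (f : A -> R) (l : list A) :
  Rsum (map (fun x => f x * c) l) = Rsum (map f l) * c.
Proof.
  induction l as [|a l IH]; simpl; [ring|].
  change (f a * c + Rsum (map (fun x => f x * c) l) = (f a + Rsum (map f l)) * c).
  rewrite IH; ring.
Qed.

Lemma Rsum_map_INR (l : list nat) : Rsum (map INR l) = INR (list_sum l).
Proof.
  induction l as [|a l IH]; simpl; [reflexivity|].
  change (INR a + Rsum (map INR l) = INR (a + list_sum l)).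
  rewrite IH, plus_INR; reflexivity.
Qed.

Lemma Rsum_telescope (h : nat -> R) (a n : nat) :
  Rsum (map (fun m => h (S m) - h m) (seq a n)) = h (a + n)%nat - h a.
Proof.
  revert a; induction n as [|n IH]; intros a; simpl.
  - rewrite Nat.add_0_r; ring.
  - change (h (S a) - h a + Rsum (map (fun m => h (S m) - h m) (seq (S a) n))
            = h (a + S n)%nat - h a).
    rewrite IH, <- Nat.add_succ_comm; ring.
Qed.

Lemma forallb_false_exists {A : Type} (f : A -> bool) (l : list A) :
  forallb f l = false -> exists x, In x l /\ f x = false.
Proof.
  induction l as [|a l IH]; simpl; [discriminate|].
  destruct (f a) eqn:Ha; simpl; intros H.
  - destruct (IH H) as [x [Hx Hfx]]; eauto.
  - eauto.
Qed.

Lemma dist2_polar (a b d1 d2 t1 t2 : R) :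
  dist2 (a + d1 * cos t1, b + d1 * sin t1) (a + d2 * cos t2, b + d2 * sin t2) ^ 2 =
  d1 ^ 2 + d2 ^ 2 - 2 * d1 * d2 * cos (t2 - t1).
Proof.
  unfold dist2; simpl fst; simpl snd.
  rewrite pow2_sqrt by (apply Rplus_le_le_0_compat; apply pow2_ge_0).
  pose proof (sin2_cos2 t1) as H1; pose proof (sin2_cos2 t2) as H2.
  unfold Rsqr in H1, H2; rewrite cos_minus; nra.
Qed.

Lemma PI3_le_of_cos (g : R) : 0 <= g <= PI -> cos g <= 1 / 2 -> PI / 3 <= g.
Proof.
  intros Hg Hc; pose proof PI_RGT_0.
  destruct (Rlt_or_le g (PI / 3)) as [Hlt|]; [exfalso|assumption].
  pose proof (cos_decreasing_1 g (PI / 3) ltac:(lra) ltac:(lra) ltac:(lra) ltac:(lra) Hlt).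
  rewrite cos_PI3 in *; lra.
Qed.

Lemma PI3_lt_of_cos (g : R) : 0 <= g <= PI -> cos g < 1 / 2 -> PI / 3 < g.
Proof.
  intros Hg Hc; pose proof PI_RGT_0.
  rewrite <- cos_PI3 in Hc; apply cos_decreasing_0 in Hc; lra.
Qed.

Lemma le_PI3_of_cos (g : R) : 0 <= g <= PI -> 1 / 2 <= cos g -> g <= PI / 3.
Proof.
  intros Hg Hc; pose proof PI_RGT_0.
  destruct (Rle_or_lt g (PI / 3)) as [|Hlt]; [assumption|exfalso].
  pose proof (cos_decreasing_1 (PI / 3) g ltac:(lra) ltac:(lra) ltac:(lra) ltac:(lra) Hlt).
  rewrite cos_PI3 in *; lra.
Qed.

Lemma lt_PI2_of_cos (g : R) : 0 <= g <= PI -> 0 < cos g -> g < PI / 2.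
Proof.
  intros Hg Hc; pose proof PI_RGT_0.
  rewrite <- cos_PI2 in Hc; apply cos_decreasing_0 in Hc; lra.
Qed.

Section TangentTriangle.

Variables s x y g : R.
Hypotheses (Hs : 0 < s) (Hx : s <= x) (Hy : s <= y).
Hypothesis Hlaw :
  (x + y) ^ 2 = (s + x) ^ 2 + (s + y) ^ 2 - 2 * (s + x) * (s + y) * cos g.

Lemma tangent_triangle_cos_identity :
  (s + x) * (s + y) * (1 - 2 * cos g) =
  3 * (x - s) * (y - s) + 2 * s * ((x - s) + (y - s)).
Proof. nra. Qed.

Lemma tangent_triangle_cos_le : cos g <= 1 / 2.
Proof.
  pose proof tangent_triangle_cos_identity.
  assert (0 <= (x - s) * (y - s)) by (apply Rmult_le_pos; lra).
  assert (0 < (s + x) * (s + y)) by (apply Rmult_lt_0_compat; lra).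
  nra.
Qed.

Lemma tangent_triangle_cos_lt : s < x \/ s < y -> cos g < 1 / 2.
Proof.
  intros Hxy; pose proof tangent_triangle_cos_identity.
  assert (0 <= (x - s) * (y - s)) by (apply Rmult_le_pos; lra).
  assert (0 < (s + x) * (s + y)) by (apply Rmult_lt_0_compat; lra).
  nra.
Qed.

Lemma tangent_triangle_cos_equilateral : x = s -> y = s -> cos g = 1 / 2.
Proof.
  pose proof tangent_triangle_cos_identity; intros -> ->.
  assert (0 < (s + s) * (s + s)) by nra.
  nra.
Qed.

Lemma tangent_triangle_cos_pos : x = s \/ y = s -> 0 < cos g.
Proof.
  pose proof tangent_triangle_cos_identity; intros [-> | ->].
  - assert (Hc : 2 * s * ((s + y) * cos g) = 2 * s * s) by nra.
    apply Rmult_eq_reg_l in Hc; [|lra].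
    assert (0 < s + y) by lra; nra.
  - assert (Hc : 2 * s * ((s + x) * cos g) = 2 * s * s) by nra.
    apply Rmult_eq_reg_l in Hc; [|lra].
    assert (0 < s + x) by lra; nra.
Qed.

End TangentTriangle.

Definition small_pair (p : letter * letter) : bool :=
  match p with (Ls, Ls) => true | _ => false end.

Definition gap_bound (p : letter * letter) : nat :=
  match p with (Ls, Ls) => 2 | (Ls, _) | (_, Ls) => 3 | _ => 6 end.

(* [g] is the angle subtended at the centre of an [s]-disc by two consecutive
   neighbours of sizes [p]. *)
Definition gap_bounds (pg : (letter * letter) * R) : Prop :=
  let (p, g) := pg in
  PI / 3 <= g <= INR (gap_bound p) * (PI / 6) /\
  (small_pair p = false -> PI / 3 < g < INR (gap_bound p) * (PI / 6)).

Lemma gap_bounds_of_tangency (r s g : R) (a b : letter) :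
  0 < s -> s < r -> r < 1 -> 0 < g < PI ->
  (radius r s a + radius r s b) ^ 2 =
    (s + radius r s a) ^ 2 + (s + radius r s b) ^ 2
    - 2 * (s + radius r s a) * (s + radius r s b) * cos g ->
  gap_bounds ((a, b), g).
Proof.
  intros Hs Hsr Hr1 Hg Hlaw; pose proof PI_RGT_0.
  assert (Ha : s <= radius r s a) by (destruct a; simpl; lra).
  assert (Hb : s <= radius r s b) by (destruct b; simpl; lra).
  assert (Hg' : 0 <= g <= PI) by lra.
  assert (Hge : PI / 3 <= g)
    by exact (PI3_le_of_cos g Hg' (tangent_triangle_cos_le s _ _ g Hs Ha Hb Hlaw)).
  assert (Hgt : s < radius r s a \/ s < radius r s b -> PI / 3 < g)
    by (intros Hab;
        exact (PI3_lt_of_cos g Hg' (tangent_triangle_cos_lt s _ _ g Hs Ha Hb Hlaw Hab))).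
  assert (Hhalf : radius r s a = s \/ radius r s b = s -> g < PI / 2)
    by (intros Hab;
        exact (lt_PI2_of_cos g Hg' (tangent_triangle_cos_pos s _ _ g Hs Ha Hb Hlaw Hab))).
  assert (Hle : radius r s a = s -> radius r s b = s -> g <= PI / 3)
    by (intros; apply le_PI3_of_cos; [exact Hg'|];
        rewrite (tangent_triangle_cos_equilateral s _ _ g Hs Ha Hb Hlaw) by assumption; lra).
  unfold gap_bounds; destruct a, b; simpl radius in *; simpl gap_bound; simpl small_pair;
    simpl INR; (split; [split|intros Hsmall; try discriminate Hsmall; split]);
    first [ lra
          | pose proof (Hgt ltac:(lra)); lra
          | pose proof (Hhalf ltac:(lra)); lra
          | pose proof (Hle eq_refl eq_refl); lra ].
Qed.

Definition admissible_pairs (ps : list (letter * letter)) : bool :=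
  if forallb small_pair ps then Nat.eqb (length ps) 6
  else Nat.ltb (length ps) 6 && Nat.ltb 12 (list_sum (map gap_bound ps)).

Lemma list_sum_gap_bound_small (ps : list (letter * letter)) :
  forallb small_pair ps = true -> list_sum (map gap_bound ps) = (2 * length ps)%nat.
Proof.
  induction ps as [|[[] []] ps IH]; simpl; try discriminate; [reflexivity|].
  intros H; rewrite (IH H); lia.
Qed.

Lemma admissible_of_gaps (l : list ((letter * letter) * R)) :
  Forall gap_bounds l -> Rsum (map snd l) = 2 * PI ->
  admissible_pairs (map fst l) = true.
Proof.
  intros Hl Hsum; rewrite Forall_forall in Hl; pose proof PI_RGT_0.
  assert (Hlo : forall x, In x l -> PI / 3 <= snd x)
    by (intros [p g] Hx; apply (Hl _ Hx)).
  assert (Hhi : forall x, In x l -> snd x <= INR (gap_bound (fst x)) * (PI / 6))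
    by (intros [p g] Hx; apply (Hl _ Hx)).
  assert (Hub : Rsum (map (fun x => INR (gap_bound (fst x)) * (PI / 6)) l)
                = INR (list_sum (map gap_bound (map fst l))) * (PI / 6))
    by (rewrite Rsum_map_scal_r, <- Rsum_map_INR, !map_map; reflexivity).
  unfold admissible_pairs; rewrite length_map.
  destruct (forallb small_pair (map fst l)) eqn:Hsmall.
  - apply Nat.eqb_eq, INR_eq.
    pose proof (Rsum_map_le _ _ l Hlo) as Hge; pose proof (Rsum_map_le _ _ l Hhi) as Hle.
    rewrite Rsum_map_const in Hge.
    rewrite Hub, list_sum_gap_bound_small, length_map, mult_INR in Hle by assumption.
    simpl INR in *; nra.
  - destruct (forallb_false_exists _ _ Hsmall) as [p [Hp Hps]].
    apply in_map_iff in Hp as [[p' g] [<- Hx]].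
    destruct (Hl _ Hx) as [_ Hstrict]; specialize (Hstrict Hps).
    assert (Hgt : INR (length l) * (PI / 3) < 2 * PI).
    { rewrite <- Rsum_map_const, <- Hsum.
      apply Rsum_map_lt; [exact Hlo|].
      exists (p', g); simpl; split; [exact Hx|lra]. }
    assert (Hlt : 2 * PI < INR (list_sum (map gap_bound (map fst l))) * (PI / 6)).
    { rewrite <- Hub, <- Hsum.
      apply Rsum_map_lt; [exact Hhi|].
      exists (p', g); simpl; split; [exact Hx|lra]. }
    apply andb_true_intro; split; apply Nat.ltb_lt, INR_lt; simpl INR; nra.
Qed.

(* The angles of the neighbours continued by [th 0 + 2 PI] after the last one,
   so that the angular gaps, including the closing one, telescope. *)
Definition closed_angle (th : nat -> R) (n m : nat) : R :=
  if Nat.ltb m n then th m else th O + 2 * PI.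

Definition angle_gap (th : nat -> R) (n m : nat) : R :=
  closed_angle th n (S m) - closed_angle th n m.

Lemma Rsum_angle_gap (th : nat -> R) (n : nat) :
  (0 < n)%nat -> Rsum (map (angle_gap th n) (seq 0 n)) = 2 * PI.
Proof.
  intros Hn; unfold angle_gap; rewrite Rsum_telescope; unfold closed_angle.
  rewrite Nat.add_0_l, Nat.ltb_irrefl.
  replace (Nat.ltb 0 n) with true by (symmetry; apply Nat.ltb_lt, Hn).
  ring.
Qed.

Lemma angle_gap_range (th : nat -> R) (n m : nat) :
  (forall j, (S j < n)%nat -> th j < th (S j) < th j + PI) ->
  th (pred n) < th O + 2 * PI < th (pred n) + PI ->
  (m < n)%nat -> 0 < angle_gap th n m < PI.
Proof.
  intros Hstep Hclose Hm; unfold angle_gap, closed_angle.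
  replace (Nat.ltb m n) with true by (symmetry; apply Nat.ltb_lt, Hm).
  destruct (Nat.ltb (S m) n) eqn:HSm.
  - apply Nat.ltb_lt in HSm; specialize (Hstep m HSm); lra.
  - apply Nat.ltb_ge in HSm; replace m with (pred n) by lia; lra.
Qed.

Lemma cos_angle_gap (th : nat -> R) (n m : nat) :
  (m < n)%nat -> cos (angle_gap th n m) = cos (th (S m mod n) - th m).
Proof.
  intros Hm; unfold angle_gap, closed_angle.
  replace (Nat.ltb m n) with true by (symmetry; apply Nat.ltb_lt, Hm).
  destruct (Nat.ltb (S m) n) eqn:HSm.
  - apply Nat.ltb_lt in HSm; rewrite Nat.mod_small by exact HSm; reflexivity.
  - apply Nat.ltb_ge in HSm; replace (S m) with n by lia.
    rewrite Nat.Div0.mod_same, <- (cos_period (th O - th m) 1).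
    f_equal; simpl INR; ring.
Qed.

Definition cyclic_pairs (w : word) : list (letter * letter) :=
  map (fun m => (nth m w Ls, nth (S m mod length w) w Ls)) (seq 0 (length w)).

Definition admissible (w : word) : bool := admissible_pairs (cyclic_pairs w).

Lemma corona_admissible (r s : R) (I : Type) (c : I -> R * R) (k : I -> letter)
    (i : I) (L : list I) :
  0 < s -> s < r -> r < 1 -> k i = Ls -> is_corona r s c k i L ->
  admissible (coding k L) = true.
Proof.
  intros Hs Hsr Hr1 Hki [_ [_ [Htan [th [Hpolar [Hstep [Hn Hclose]]]]]]].
  set (n := length L) in *.
  set (l := map (fun m => ((k (nth m L i), k (nth (S m mod n) L i)), angle_gap th n m))
                (seq 0 n)).
  assert (Hpairs : map fst l = cyclic_pairs (coding k L)).
  { unfold l, cyclic_pairs, coding; rewrite map_map, length_map; fold n.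
    apply map_ext; intros m; rewrite <- Hki, !map_nth; reflexivity. }
  assert (Hsum : Rsum (map snd l) = 2 * PI)
    by (unfold l; rewrite map_map; apply Rsum_angle_gap, Hn).
  assert (Hbounds : Forall gap_bounds l).
  { apply Forall_forall; intros x Hx.
    apply in_map_iff in Hx as [m [<- Hm]]; apply in_seq in Hm.
    assert (Hm' : (S m mod n < n)%nat) by (apply Nat.mod_upper_bound; lia).
    apply gap_bounds_of_tangency with r s; try assumption.
    - apply angle_gap_range; [exact Hstep|exact Hclose|lia].
    - destruct (Htan m ltac:(lia)) as [_ Hd].
      rewrite (Hpolar m), (Hpolar _ Hm') in Hd by lia.
      rewrite <- Hd, dist2_polar, cos_angle_gap, Hki by lia; simpl radius; ring. }
  unfold admissible; rewrite <- Hpairs; apply admissible_of_gaps; assumption.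
Qed.

Definition letter_eq_dec (a b : letter) : {a = b} + {a <> b}.
Proof. decide equality. Defined.

Definition word_eqb (w w' : word) : bool :=
  if list_eq_dec letter_eq_dec w w' then true else false.

Definition cyc_equivb (w w' : word) : bool :=
  existsb (fun n => word_eqb (rot n w) w' || word_eqb (rot n (rev w)) w')
    (seq 0 (length w)).

Lemma cyc_equivb_sound (w w' : word) : cyc_equivb w w' = true -> cyc_equiv w w'.
Proof.
  unfold cyc_equivb, word_eqb; intros H.
  apply existsb_exists in H as [n [_ H]]; exists n.
  apply orb_true_iff in H as [H|H];
    destruct (list_eq_dec _ _ _); try discriminate; auto.
Qed.

Definition allowedb (w : word) : bool := existsb (cyc_equivb w) allowed_words.

Lemma allowedb_sound (w : word) :
  allowedb w = true -> exists w', In w' allowed_words /\ cyc_equiv w w'.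
Proof.
  intros H; apply existsb_exists in H as [w' [Hw' H]].
  exists w'; split; [exact Hw'|apply cyc_equivb_sound, H].
Qed.

Fixpoint words_of_length (n : nat) : list word :=
  match n with
  | O => [[]]
  | S n => flat_map (fun w => [L1 :: w; Lr :: w; Ls :: w]) (words_of_length n)
  end.

Lemma in_words_of_length (w : word) : In w (words_of_length (length w)).
Proof.
  induction w as [|a w IH]; simpl; [left; reflexivity|].
  apply in_flat_map; exists w; split; [exact IH|].
  destruct a; simpl; auto.
Qed.

Lemma admissible_length (w : word) : admissible w = true -> (length w <= 6)%nat.
Proof.
  unfold admissible, admissible_pairs, cyclic_pairs.
  rewrite length_map, length_seq.
  destruct forallb;
    [intros H%Nat.eqb_eq | intros [H _]%andb_prop; apply Nat.ltb_lt in H]; lia.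
Qed.

Lemma admissible_allowed_upto_6 (n : nat) : (n <= 6)%nat ->
  forallb (fun w => implb (admissible w) (allowedb w)) (words_of_length n) = true.
Proof.
  intros Hn; do 7 (destruct n as [|n]; [vm_compute; reflexivity|]); lia.
Qed.

Lemma allowed_of_admissible (w : word) :
  admissible w = true -> exists w', In w' allowed_words /\ cyc_equiv w w'.
Proof.
  intros Hw; apply allowedb_sound.
  pose proof (admissible_allowed_upto_6 _ (admissible_length w Hw)) as Hall.
  rewrite forallb_forall in Hall.
  specialize (Hall w (in_words_of_length w)); rewrite Hw in Hall; exact Hall.
Qed.

(* Only the corona of the given disc matters. *)
Theorem mainTheorem3 (r s : R) (I : Type) (c : I -> R * R) (k : I -> letter) :
  0 < s -> s < r -> r < 1 ->
  is_compact_packing r s c k ->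
  forall (i : I) (L : list I),
    k i = Ls ->
    is_corona r s c k i L ->
    exists w, In w allowed_words /\ cyc_equiv (coding k L) w.
Proof.
  intros Hs Hsr Hr1 _ i L Hki Hcor.
  apply allowed_of_admissible, (corona_admissible r s I c k i L); assumption.
Qed.
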